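(* For all integers $m\ge1$ and $q\ge1$, the Jacobian determinant of the polynomial map $\mathbb R^m\to\mathbb R^m$, $\xi\mapsto\nabla_\xi A_{q+1}(\xi)-(q+1)^2A_q(\xi)\underline1$, is a nonzero polynomial in $\xi$; consequently this map is a local diffeomorphism outside the real algebraic hypersurface where this determinant vanishes.
   Context: $A_r(\xi_1,\dots,\xi_m)=\sum_{k\in\mathbb N^m,\ \sum_ik_i=r}\binom{r}{k_1,\dots,k_m}^2\prod_i\xi_i^{k_i}$ (multinomial coefficients); $\underline1=(1,\dots,1)\in\mathbb R^m$. *)

From HB Require Import structures.
From mathcomp Require Import all_boot all_order all_algebra.
Set Implicit Arguments. Unset Strict Implicit. Unset Printing Implicit Defensive.
Import Order.TTheory GRing.Theory Num.Theory.
Local Open Scope ring_scope.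

(* Multivariate polynomials in m variables over R, represented as formal sums
   (finite lists) of terms (coefficient, exponent vector). *)
Definition mpoly (R : nzRingType) (m : nat) := seq (R * {ffun 'I_m -> nat}).

Definition meval (R : comNzRingType) m (p : mpoly R m) (xi : 'rV[R]_m) : R :=
  \sum_(t <- p) t.1 * \prod_(i < m) xi 0 i ^+ t.2 i.

Definition mderiv (R : nzRingType) m (j : 'I_m) (p : mpoly R m) : mpoly R m :=
  [seq ((t.2 j)%:R * t.1, [ffun i => (t.2 i - (i == j))%N]) | t : R * {ffun 'I_m -> nat} <- p].

Definition madd (R : nzRingType) m (p p' : mpoly R m) : mpoly R m := p ++ p'.
Definition mscale (R : nzRingType) m (c : R) (p : mpoly R m) : mpoly R m :=
  [seq (c * t.1, t.2) | t : R * {ffun 'I_m -> nat} <- p].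

Definition multinom m (r : nat) (k : {ffun 'I_m -> nat}) : nat :=
  (r`! %/ \prod_(i < m) (k i)`!)%N.

Definition Apoly (R : nzRingType) (m r : nat) : mpoly R m :=
  [seq (((multinom r [ffun i => val (k i)]) ^ 2)%N%:R, [ffun i => val (k i)])
  | k : {ffun 'I_m -> 'I_r.+1} <- enum {ffun 'I_m -> 'I_r.+1}
  & (\sum_(i < m) val (k i) == r)%N].

Definition Fmap (R : nzRingType) (m q : nat) (i : 'I_m) : mpoly R m :=
  madd (mderiv i (Apoly R m q.+1)) (mscale (- (q.+1 ^ 2)%N%:R) (Apoly R m q)).

Definition jacF (R : comNzRingType) (m q : nat) (xi : 'rV[R]_m) : 'M[R]_m :=
  \matrix_(i < m, j < m) meval (mderiv j (Fmap R q i)) xi.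

(* At xi = e_0 = (1, 0, ..., 0) a monomial is 1 if it only involves xi_0 and
   0 otherwise, so every first or second derivative of A_r at e_0 reduces to
   a single multinomial term.  Computing these terms shows that the Jacobian at
   e_0 vanishes below the diagonal (only the first row is nonzero off the
   diagonal), while its diagonal entries are -(q+1) q^2 and -(q+1)^2 q^2 / 2.
   Hence its determinant does not vanish at e_0. *)

From HB Require Import structures.
From mathcomp Require Import all_boot all_order all_algebra zify.
Set Implicit Arguments. Unset Strict Implicit. Unset Printing Implicit Defensive.
Import Order.TTheory GRing.Theory Num.Theory.
Local Open Scope ring_scope.

Section FormalCalculus.
Variables (R : comNzRingType) (m : nat).
Implicit Types (p : mpoly R m) (xi : 'rV[R]_m).

Lemma meval_madd p p' xi : meval (madd p p') xi = meval p xi + meval p' xi.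
Proof. by rewrite /meval /madd big_cat. Qed.

Lemma mderiv_madd j p p' : mderiv j (madd p p') = madd (mderiv j p) (mderiv j p').
Proof. by rewrite /mderiv /madd map_cat. Qed.

Lemma meval_mderiv_mscale j c p xi :
  meval (mderiv j (mscale c p)) xi = c * meval (mderiv j p) xi.
Proof.
rewrite /meval /mderiv /mscale -map_comp !big_map big_distrr.
by apply: eq_bigr => t _ /=; rewrite !mulrA [_ * c]mulrC.
Qed.

Lemma meval_mderiv j p xi : meval (mderiv j p) xi =
  \sum_(t <- p) (t.2 j)%:R * t.1 * \prod_(l < m) xi 0 l ^+ (t.2 l - (l == j)).
Proof.
rewrite /meval big_map; apply: eq_bigr => t _ /=.
by congr (_ * _); apply: eq_bigr => l _; rewrite ffunE.
Qed.

Lemma meval_mderiv2 i j p xi : meval (mderiv j (mderiv i p)) xi =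
  \sum_(t <- p) ((t.2 j - (j == i)) * t.2 i)%:R * t.1 *
    \prod_(l < m) xi 0 l ^+ (t.2 l - ((l == i) + (l == j))).
Proof.
rewrite /meval /mderiv -map_comp big_map; apply: eq_bigr => t _ /=.
rewrite ffunE natrM mulrA; congr (_ * _).
by apply: eq_bigr => l _; rewrite !ffunE subnDA.
Qed.

Definition mexp r (k : {ffun 'I_m -> 'I_r.+1}) : {ffun 'I_m -> nat} :=
  [ffun l => val (k l)].

Lemma big_Apoly r (F : R * {ffun 'I_m -> nat} -> R) :
  \sum_(t <- Apoly R m r) F t =
  \sum_(k : {ffun 'I_m -> 'I_r.+1} | (\sum_(l < m) val (k l) == r)%N)
    F (((multinom r (mexp k)) ^ 2)%N%:R, mexp k).
Proof. by rewrite big_map big_filter big_enum_cond. Qed.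

Lemma multinom_le1 r (k : {ffun 'I_m -> nat}) (P : pred 'I_m) :
  (forall l, ~~ P l -> k l <= 1)%N ->
  multinom r k = (r`! %/ \prod_(l | P l) (k l)`!)%N.
Proof.
move=> k_le1; rewrite /multinom (bigID P) /= [X in (_ * X)%N]big1 ?muln1 // => l /k_le1.
by case: (k l) => [|[]].
Qed.

End FormalCalculus.

Section AtFirstBasisVector.
Variables (R : comNzRingType) (n : nat).
Local Notation m := n.+1.
Local Notation e0 := ('e_ord0 : 'rV[R]_m).
Implicit Types d k : {ffun 'I_m -> nat}.

Lemma prod_e0_expn (e : 'I_m -> nat) :
  \prod_(l < m) e0 0 l ^+ e l = [forall l, (l != ord0) ==> (e l == 0%N)]%:R.
Proof.
have [supp | /forallPn [l]] := boolP [forall l, (l != ord0) ==> (e l == 0%N)].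
  apply: big1 => l _; rewrite mxE eqxx /=.
  by case: (eqVneq l ord0) => [->|/(implyP (forallP supp l))/eqP->]; rewrite ?expr1n ?expr0.
rewrite negb_imply => /andP[hl el].
by rewrite (bigD1 l) //= mxE eqxx (negPf hl) expr0n (negPf el) mul0r.
Qed.

(* The only multi-index of total degree r that agrees with d off coordinate 0
   (provided the total degree of d is at most r). *)
Definition pad0 r (d : {ffun 'I_m -> nat}) : {ffun 'I_m -> nat} :=
  [ffun l => (d l + (l == ord0) * (r - \sum_(l' < m) d l'))%N].

Lemma sum_pad0 r d : (\sum_(l < m) d l <= r)%N -> (\sum_(l < m) pad0 r d l)%N = r.
Proof.
move=> hd; under eq_bigr do rewrite ffunE.
set c := (r - _)%N; rewrite big_split /=.
have -> : (\sum_(l < m) (l == ord0) * c = c)%N.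
  by rewrite (bigD1 ord0) //= mul1n big1 ?addn0 // => l /negPf->.
exact: subnKC.
Qed.

Lemma pad0_unique r d k :
  (\sum_(l < m) k l)%N = r -> (forall l, d l <= k l)%N ->
  (forall l, l != ord0 -> k l = d l) -> k = pad0 r d.
Proof.
move=> hk dk koff; apply/ffunP => l; rewrite ffunE.
case: (eqVneq l ord0) => [->|hl]; last by rewrite koff // mul0n addn0.
have split0 (f : 'I_m -> nat) :
    (\sum_(l < m) f l = f ord0 + \sum_(l < m | l != ord0) f l)%N by rewrite (bigD1 ord0).
have koff_sum : (\sum_(l < m | l != ord0) k l = \sum_(l < m | l != ord0) d l)%N.
  exact: eq_bigr.
(* generalizing first: lia sees the convertible occurrences of [k ord0] as distinct atoms *)
by move: hk (dk ord0); rewrite !split0 koff_sum mul1n; move: (k ord0) (d ord0) => a b; lia.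
Qed.

(* The hypothesis on c says that a term vanishes whenever the truncated
   subtraction k - d in its exponent is not exact, as happens for the
   coefficients produced by differentiation. *)
Lemma sum_mexp_at_e0 r d (c : {ffun 'I_m -> nat} -> nat) :
  (\sum_(l < m) d l <= r)%N -> (forall k, c k != 0%N -> forall l, d l <= k l)%N ->
  \sum_(k : {ffun 'I_m -> 'I_r.+1} | (\sum_(l < m) val (k l) == r)%N)
     (c (mexp k))%:R * \prod_(l < m) e0 0 l ^+ (mexp k l - d l) = (c (pad0 r d))%:R.
Proof.
move=> hd hc.
have pad_le l : (pad0 r d l <= r)%N by rewrite -{2}(sum_pad0 hd) (bigD1 l) //= leq_addr.
pose k0 : {ffun 'I_m -> 'I_r.+1} := [ffun l => inord (pad0 r d l)].
have k0E : mexp k0 = pad0 r d by apply/ffunP => l; rewrite ffunE [k0 l]ffunE /= inordK // ltnS.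
rewrite (bigD1 k0) /=; last first.
  by apply/eqP; rewrite -[RHS](sum_pad0 hd) -k0E; apply: eq_bigr => l _; rewrite [RHS]ffunE.
rewrite [X in _ + X]big1 ?addr0 => [|k /andP[/eqP hk nk]].
  rewrite k0E prod_e0_expn.
  have -> : [forall l, (l != ord0) ==> ((pad0 r d l - d l)%N == 0%N)].
    by apply/forallP => l; apply/implyP => hl; rewrite ffunE (negPf hl) mul0n addn0 subnn.
  by rewrite mulr1.
rewrite prod_e0_expn.
have [supp|] := boolP [forall l, (l != ord0) ==> ((mexp k l - d l)%N == 0%N)]; last first.
  by rewrite mulr0.
suff -> : c (mexp k) = 0%N by rewrite mul0r.
apply: contraNeq nk => /hc dk.
have : mexp k = pad0 r d.
  apply: pad0_unique => [|//|l hl].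
    by apply: etrans hk; apply: eq_bigr => l _; rewrite ffunE.
  by move: (implyP (forallP supp l) hl) (dk l) => /eqP; lia.
rewrite -k0E => /ffunP ek; apply/eqP/ffunP => l; apply/val_inj.
by move: (ek l); rewrite !ffunE.
Qed.

Definition mdelta i : {ffun 'I_m -> nat} := [ffun l => nat_of_bool (l == i)].
Definition mdelta2 i j : {ffun 'I_m -> nat} := [ffun l => ((l == i) + (l == j))%N].

Lemma sum_mdelta i : (\sum_(l < m) mdelta i l)%N = 1%N.
Proof. by rewrite (bigD1 i) //= ffunE eqxx big1 // => l /negPf l_i; rewrite ffunE l_i. Qed.

Lemma sum_mdelta2 i j : (\sum_(l < m) mdelta2 i j l)%N = 2%N.
Proof.
rewrite (eq_bigr (fun l => mdelta i l + mdelta j l)%N) => [|l _]; last by rewrite !ffunE.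
by rewrite big_split /= !sum_mdelta.
Qed.

Definition dA_e0 r j : nat :=
  pad0 r (mdelta j) j * multinom r (pad0 r (mdelta j)) ^ 2.
Definition d2A_e0 r i j : nat :=
  (pad0 r (mdelta2 i j) j - (j == i)) * pad0 r (mdelta2 i j) i *
    multinom r (pad0 r (mdelta2 i j)) ^ 2.

Lemma meval_mderiv_Apoly_e0 r j : (0 < r)%N ->
  meval (mderiv j (Apoly R m r)) e0 = (dA_e0 r j)%:R.
Proof.
move=> r_gt0; rewrite meval_mderiv big_Apoly.
rewrite -(@sum_mexp_at_e0 r (mdelta j) (fun k => k j * multinom r k ^ 2)%N).
- apply: eq_bigr => k _ /=; rewrite natrM; congr (_ * _).
  by apply: eq_bigr => l _; rewrite /mdelta !ffunE.
- by rewrite sum_mdelta.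
move=> k; rewrite muln_eq0 negb_or => /andP[kj _] l; rewrite ffunE.
by case: (eqVneq l j) => [->|] /=; lia.
Qed.

Lemma meval_mderiv2_Apoly_e0 r i j : (1 < r)%N ->
  meval (mderiv j (mderiv i (Apoly R m r))) e0 = (d2A_e0 r i j)%:R.
Proof.
move=> r_gt1; rewrite meval_mderiv2 big_Apoly.
rewrite -(@sum_mexp_at_e0 r (mdelta2 i j)
  (fun k => (k j - (j == i)) * k i * multinom r k ^ 2)%N).
- apply: eq_bigr => k _ /=; rewrite [in RHS]natrM; congr (_ * _).
  by apply: eq_bigr => l _; rewrite /mdelta2 !ffunE.
- by rewrite sum_mdelta2.
move=> k; rewrite !muln_eq0 !negb_or => /andP[/andP[kj ki] _] l; rewrite ffunE.
have [ji|ji] := eqVneq j i.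
  move: kj; rewrite ji eqxx => kj.
  by case: (eqVneq l i) => [->|_] /=; lia.
move: kj; rewrite (negPf ji) subn0 => kj.
case: (eqVneq l i) => [->|_]; first by rewrite eq_sym (negPf ji) /=; lia.
by case: (eqVneq l j) => [->|_] /=; lia.
Qed.

Lemma pad0_mdelta r j l : pad0 r (mdelta j) l = ((l == j) + (l == ord0) * (r - 1))%N.
Proof. by rewrite ffunE sum_mdelta ffunE. Qed.

Lemma pad0_mdelta2 r i j l :
  pad0 r (mdelta2 i j) l = ((l == i) + (l == j) + (l == ord0) * (r - 2))%N.
Proof. by rewrite ffunE sum_mdelta2 ffunE. Qed.

Lemma dA_e0_ord0 r : (0 < r)%N -> dA_e0 r ord0 = r.
Proof.
move=> r_gt0; rewrite /dA_e0 (@multinom_le1 _ _ _ (pred1 ord0)); last first.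
  by move=> l /negPf /= l0; rewrite pad0_mdelta l0.
rewrite big_pred1_eq !pad0_mdelta eqxx /= mul1n add1n subn1 prednK //.
by rewrite divnn fact_gt0 exp1n muln1.
Qed.

Lemma dA_e0_neq0 r j : (0 < r)%N -> j != ord0 -> dA_e0 r j = (r ^ 2)%N.
Proof.
case: r => // r _ j0.
rewrite /dA_e0 (@multinom_le1 _ _ _ (pred1 ord0)); last first.
  by move=> l /negPf /= l0; rewrite pad0_mdelta l0 addn0 leq_b1.
rewrite big_pred1_eq !pad0_mdelta !eqxx (negPf j0) eq_sym (negPf j0) /= subn1 /=.
by rewrite mul0n add0n mul1n factS mulnK ?fact_gt0 // addn0 mul1n.
Qed.

Lemma d2A_e0_ord0 r : (1 < r)%N -> d2A_e0 r ord0 ord0 = (r * (r - 1))%N.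
Proof.
move=> r_gt1; rewrite /d2A_e0 (@multinom_le1 _ _ _ (pred1 ord0)); last first.
  by move=> l /negPf /= l0; rewrite pad0_mdelta2 l0.
rewrite big_pred1_eq !pad0_mdelta2 !eqxx /= mul1n.
have -> : (1 + 1 + (r - 2) = r)%N by lia.
by rewrite divnn fact_gt0 exp1n muln1 mulnC.
Qed.

Lemma d2A_e0_col0 r i : (1 < r)%N -> i != ord0 -> d2A_e0 r i ord0 = ((r - 1) * r ^ 2)%N.
Proof.
case: r => [|[|r]] // _ i0.
rewrite /d2A_e0 (@multinom_le1 _ _ _ (pred1 ord0)); last first.
  by move=> l /negPf /= l0; rewrite pad0_mdelta2 l0 !addn0 leq_b1.
rewrite big_pred1_eq !pad0_mdelta2 !eqxx (negPf i0) eq_sym (negPf i0) /=.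
have -> : (0 + 1 + 1 * (r.+2 - 2) = r.+1)%N by lia.
by rewrite factS mulnK ?fact_gt0 // subn0 mul0n !addn0 muln1 subn1.
Qed.

Lemma d2A_e0_offdiag r i j : (1 < r)%N -> i != ord0 -> j != ord0 -> i != j ->
  d2A_e0 r i j = ((r * (r - 1)) ^ 2)%N.
Proof.
case: r => [|[|r]] // _ i0 j0 ij.
have ji : j != i by rewrite eq_sym.
rewrite /d2A_e0 (@multinom_le1 _ _ _ (pred1 ord0)); last first.
  move=> l /negPf /= l0; rewrite pad0_mdelta2 l0 addn0.
  by case: (eqVneq l i) => [->|_]; rewrite ?(negPf ij) // leq_b1.
rewrite big_pred1_eq !pad0_mdelta2 !eqxx (negPf i0) (negPf j0) (negPf ij) (negPf ji).
rewrite ![ord0 == _]eq_sym (negPf i0) (negPf j0) /=.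
have -> : (0 + 0 + 1 * (r.+2 - 2) = r)%N by lia.
by rewrite !factS mulnA mulnK ?fact_gt0 // !mul0n !addn0 add0n subn0 !mul1n subn1.
Qed.

Lemma d2A_e0_diag r i : (1 < r)%N -> i != ord0 -> d2A_e0 r i i = (2 * 'C(r, 2) ^ 2)%N.
Proof.
move=> r_gt1 i0.
rewrite /d2A_e0 (@multinom_le1 _ _ _ [pred l | (l == ord0) || (l == i)]); last first.
  by move=> l /norP[/negPf l0 /negPf li]; rewrite pad0_mdelta2 l0 li.
rewrite (bigD1 ord0) //= (@big_pred1 _ _ _ _ i) => [|l /=]; last first.
  by case: (eqVneq l ord0) => [->|_]; rewrite ?andbT // eq_sym (negPf i0).
rewrite !pad0_mdelta2 !eqxx (negPf i0) eq_sym (negPf i0) /= !mul0n !mul1n !addn0 !add0n.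
by rewrite [((r - 2)`! * _)%N]mulnC -bin_factd ?(ltnW r_gt1) // mulnC.
Qed.

Lemma jacF_e0 q (i j : 'I_m) : (0 < q)%N ->
  jacF q e0 i j = (d2A_e0 q.+1 i j)%:R - (q.+1 ^ 2 * dA_e0 q j)%N%:R.
Proof.
move=> q_gt0; rewrite mxE /Fmap mderiv_madd meval_madd meval_mderiv_mscale.
by rewrite meval_mderiv2_Apoly_e0 // meval_mderiv_Apoly_e0 // natrM mulNr.
Qed.

Lemma jacF_e0_lower q (i j : 'I_m) : (0 < q)%N -> (j < i)%N -> jacF q e0 i j = 0.
Proof.
move=> q_gt0 ji; apply/eqP; rewrite jacF_e0 // subr_eq0; apply/eqP; congr _%:R.
have i0 : i != ord0 by rewrite -(inj_eq val_inj) -lt0n (leq_ltn_trans _ ji).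
have [->|j0] := eqVneq j ord0; first by rewrite d2A_e0_col0 // dA_e0_ord0 // subn1 mulnC.
have ij : i != j by rewrite -(inj_eq val_inj) gtn_eqF.
by rewrite d2A_e0_offdiag // dA_e0_neq0 // subn1 expnMn.
Qed.

End AtFirstBasisVector.

Lemma jacF_e0_diag_neq0 (R : numDomainType) n q (i : 'I_n.+1) : (0 < q)%N ->
  jacF q ('e_ord0 : 'rV[R]_n.+1) i i != 0.
Proof.
move=> q_gt0; rewrite jacF_e0 // subr_eq0 eqr_nat.
have [->|i0] := eqVneq i ord0; first by rewrite d2A_e0_ord0 // dA_e0_ord0 // subn1; nia.
rewrite d2A_e0_diag // dA_e0_neq0 //.
have bin2E : ('C(q.+1, 2) * 2 = q.+1 * q)%N by rewrite (bin_ffact q.+1 2) ffactSS ffactn1.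
have bin2_gt0 : (0 < 'C(q.+1, 2))%N by rewrite bin_gt0.
rewrite -expnMn -bin2E; nia.
Qed.

Unset Implicit Arguments.
Theorem mainTheorem8 (R : realFieldType) (m q : nat) (hm : (1 <= m)%N) (hq : (1 <= q)%N) :
  exists xi : 'rV[R]_m, \det (jacF q xi) != 0.
Proof.
case: m hm => // n _; exists 'e_ord0.
rewrite -det_tr det_trig; last by apply/is_trig_mxP => i j ij; rewrite mxE jacF_e0_lower.
by apply/prodf_neq0 => i _; rewrite mxE jacF_e0_diag_neq0.
Qed.
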